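(* Let $n\ge1$, $h>0$, $\lambda>0$, and let $f:\mathbb{R}^n\to\mathbb{R}$ be a function whose modulus of continuity $\omega_f(t)=\sup\{|f(x)-f(y)|:x,y\in\mathbb{R}^n,\ |x-y|\le t\}$ satisfies $\omega_f(t)\le at+b$ for all $t\ge0$, with constants $a>0$, $b\ge0$. Then for every grid point $x_k\in h\mathbb{Z}^n$, $$\big|M^h_\lambda(f)(x_k)-M_\lambda(f)(x_k)\big|\le \omega_f(h\sqrt n)+2\lambda h^2 n+2h\sqrt\lambda\,d(\lambda),$$ where $d(\lambda)=\sqrt{\omega_f\big(a/\lambda+\sqrt{b/\lambda}\big)}$.
   Context: $M_\lambda(f)(x)=\inf_{y\in\mathbb{R}^n}\{f(y)+\lambda|y-x|^2\}$ is the lower Moreau envelope, and the discrete lower Moreau envelope at a grid point $x_k$ of the grid of size $h$ is $M^h_\lambda(f)(x_k)=\inf\{f(x_k+rh)+\lambda h^2|r|^2:\ r\in\mathbb{Z}^n\}$. Here $|\cdot|$ is the Euclidean norm. *)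

From HB Require Import structures.
From mathcomp Require Import all_boot all_order all_algebra.
From mathcomp Require Import all_classical all_reals all_analysis.
Set Implicit Arguments. Unset Strict Implicit. Unset Printing Implicit Defensive.
Import Order.TTheory GRing.Theory Num.Theory.
Local Open Scope classical_set_scope.
Local Open Scope ring_scope.

Definition enorm (R : realType) (n : nat) (v : 'rV[R]_n) : R :=
  Num.sqrt (\sum_(i < n) v ord0 i ^+ 2).

Definition zvec (R : realType) (n : nat) (r : 'rV[int]_n) : 'rV[R]_n :=
  map_mx (fun z : int => z%:~R) r.

Definition moreau (R : realType) (n : nat) (lam : R) (f : 'rV[R]_n -> R)
  (x : 'rV[R]_n) : R :=
  inf [set f y + lam * enorm (y - x) ^+ 2 | y in [set: 'rV[R]_n]].

Definition dmoreau (R : realType) (n : nat) (h lam : R) (f : 'rV[R]_n -> R)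
  (x : 'rV[R]_n) : R :=
  inf [set f (x + h *: zvec R r) + lam * h ^+ 2 * enorm (zvec R r) ^+ 2
      | r in [set: 'rV[int]_n]].

(* Modulus of continuity, valued in the extended reals (may be +oo a priori). *)
Definition modcont (R : realType) (n : nat) (f : 'rV[R]_n -> R) (t : R) : \bar R :=
  ereal_sup [set e : \bar R | exists x y : 'rV[R]_n,
    enorm (x - y) <= t /\ e = (`|f x - f y|)%:E].

(** Every point y is shadowed by a grid point x + h r, obtained by rounding
    each coordinate of (y - x) / h toward zero: it is no farther from x than y
    is, and at distance at most h sqrt n from y.  Hence every value of the
    continuous Moreau functional is matched, up to omega_f (h sqrt n), by a
    value of the discrete one, while the discrete values are among the
    continuous ones.  Thus 0 <= M^h - M <= omega_f (h sqrt n), which is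
    stronger than the claimed bound; the affine bound on omega_f is only used
    to make omega_f finite and the infima well defined. *)
From HB Require Import structures.
From mathcomp Require Import all_boot all_order all_algebra.
From mathcomp Require Import all_classical all_reals all_analysis.
From mathcomp Require Import lra.
Set Implicit Arguments. Unset Strict Implicit. Unset Printing Implicit Defensive.
Import Order.TTheory GRing.Theory Num.Theory.
Local Open Scope classical_set_scope.
Local Open Scope ring_scope.

Section RoundTowardZero.
Context {R : archiRealFieldType}.

Definition ztrunc (c : R) : int := if 0 <= c then Num.floor c else Num.ceil c.

Lemma ztrunc_sqr_le c : (ztrunc c)%:~R ^+ 2 <= c ^+ 2.
Proof.
rewrite /ztrunc; case: ifP => c_ge0.
- have := floor_le c; have : 0 <= (Num.floor c)%:~R :> R by rewrite ler0z floor_ge0.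
  nra.
- move/negbT: c_ge0; rewrite -ltNge => /ltW c_le0.
  have := ceil_ge c; have : (Num.ceil c)%:~R <= 0 :> R by rewrite lerz0 ceil_le0.
  nra.
Qed.

Lemma sqr_subr_ztrunc_le1 c : (c - (ztrunc c)%:~R) ^+ 2 <= 1.
Proof.
rewrite /ztrunc; case: ifP => _.
- have := floor_le c; have := floorD1_gt c; rewrite intrD; nra.
- have := ceil_ge c; have := ceilB1_lt c; rewrite intrB; nra.
Qed.

End RoundTowardZero.

Section GridMoreau.
Context {R : realType} {n : nat}.
Implicit Types (u v w x y : 'rV[R]_n) (f : 'rV[R]_n -> R).

Lemma enorm_ge0 v : 0 <= enorm v.
Proof. exact: sqrtr_ge0. Qed.

Lemma enorm0 : enorm (0 : 'rV[R]_n) = 0.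
Proof. by rewrite /enorm big1 ?sqrtr0 // => i _; rewrite mxE expr0n. Qed.

Lemma enorm_sqr v : enorm v ^+ 2 = \sum_(i < n) v ord0 i ^+ 2.
Proof. by rewrite /enorm sqr_sqrtr // sumr_ge0 // => i _; rewrite sqr_ge0. Qed.

Lemma enormZ_sqr (c : R) v : enorm (c *: v) ^+ 2 = c ^+ 2 * enorm v ^+ 2.
Proof. by rewrite !enorm_sqr mulr_sumr; apply: eq_bigr => i _; rewrite mxE exprMn. Qed.

Lemma enorm_le v w : (forall i, v ord0 i ^+ 2 <= w ord0 i ^+ 2) -> enorm v <= enorm w.
Proof. by move=> vw; apply: ler_wsqrtr; apply: ler_sum => i _. Qed.

Lemma enorm_le_sqrtn v (c : R) :
  0 <= c -> (forall i, v ord0 i ^+ 2 <= c ^+ 2) -> enorm v <= c * Num.sqrt n%:R.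
Proof.
move=> c_ge0 vc; rewrite -[c]ger0_norm // -sqrtr_sqr -sqrtrM ?sqr_ge0 //.
apply: ler_wsqrtr; rewrite -[n in n%:R]card_ord -sumr_const mulr_sumr.
by apply: ler_sum => i _; rewrite mulr1.
Qed.

Lemma grid_shadow (h : R) (d : 'rV[R]_n) : 0 < h ->
  exists r : 'rV[int]_n,
    enorm (h *: zvec R r) <= enorm d /\ enorm (h *: zvec R r - d) <= h * Num.sqrt n%:R.
Proof.
move=> h_gt0; have [c dE] : exists c : 'I_n -> R, forall i, d ord0 i = h * c i.
  by exists (fun i => d ord0 i / h) => i; rewrite mulrC divfK ?gt_eqF.
exists (\row_i ztrunc (c i)); split.
- apply: enorm_le => i; rewrite !mxE dE !exprMn ler_pM2l ?exprn_gt0 //.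
  exact: ztrunc_sqr_le.
- apply: enorm_le_sqrtn => [|i]; first exact: ltW.
  rewrite !mxE dE -mulrBr exprMn ler_piMr ?sqr_ge0 // -sqrrN opprB.
  exact: sqr_subr_ztrunc_le1.
Qed.

Lemma le_modcont f t u v : enorm (u - v) <= t -> (`|f u - f v|%:E <= modcont f t)%E.
Proof. by move=> uv; apply: ereal_sup_ubound; exists u, v. Qed.

Lemma le_fine_modcont f t (c : R) u v : (modcont f t <= c%:E)%E ->
  enorm (u - v) <= t -> `|f u - f v| <= fine (modcont f t).
Proof.
move=> fin /(le_modcont f); move: fin.
by case: (modcont f t) => [m| |] //= _; rewrite lee_fin.
Qed.

Definition moreau_set (lam : R) f x :=
  [set f y + lam * enorm (y - x) ^+ 2 | y in [set: 'rV[R]_n]].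

Definition grid_set (h lam : R) f x :=
  [set f (x + h *: zvec R r) + lam * h ^+ 2 * enorm (zvec R r) ^+ 2
  | r in [set: 'rV[int]_n]].

Lemma grid_set_sub (h lam : R) f x : grid_set h lam f x `<=` moreau_set lam f x.
Proof.
move=> _ [r _ <-]; exists (x + h *: zvec R r) => //.
by rewrite addrAC subrr add0r enormZ_sqr mulrA.
Qed.

(* [lam * (t - c) ^+ 2 >= 0] with [c = a / (2 lam)] absorbs the linear loss [- a t]. *)
Lemma moreau_set_has_lbound (lam a b : R) f x : 0 < lam ->
  (forall y, f x - a * enorm (y - x) - b <= f y) -> has_lbound (moreau_set lam f x).
Proof.
move=> lam_gt0 growth; pose c := a / (2 * lam).
have ac : a = 2 * lam * c by rewrite mulrC divfK // mulf_neq0 ?gt_eqF.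
exists (f x - b - lam * c ^+ 2) => _ [y _ <-].
have := growth y; have : 0 <= lam * (enorm (y - x) - c) ^+ 2.
  by rewrite mulr_ge0 ?sqr_ge0 ?ltW.
rewrite ac; nra.
Qed.

Lemma moreau_le_dmoreau (h lam : R) f x : has_lbound (moreau_set lam f x) ->
  moreau lam f x <= dmoreau h lam f x.
Proof.
move=> lbS; apply: lb_le_inf; first by exists (f (x + h *: zvec R 0)
  + lam * h ^+ 2 * enorm (zvec R (0 : 'rV[int]_n)) ^+ 2), 0.
by move=> s /grid_set_sub; apply: ge_inf.
Qed.

Lemma dmoreau_le_moreau (h lam w : R) f x : 0 < h -> 0 <= lam ->
  has_lbound (moreau_set lam f x) ->
  (forall u v, enorm (u - v) <= h * Num.sqrt n%:R -> `|f u - f v| <= w) ->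
  dmoreau h lam f x <= moreau lam f x + w.
Proof.
move=> h_gt0 lam_ge0 [l lbS] fw; rewrite -lerBlDr.
apply: lb_le_inf; first by exists (f x + lam * enorm (x - x) ^+ 2), x.
move=> _ [y _ <-]; have [r [r_le ry]] := grid_shadow (y - x) h_gt0.
have lbD : has_lbound (grid_set h lam f x).
  by exists l => s /grid_set_sub; apply: lbS.
have infD := ge_inf lbD (ex_intro2 _ _ r I erefl).
have zy : enorm (x + h *: zvec R r - y) <= h * Num.sqrt n%:R.
  by rewrite [x + _]addrC -addrA -opprB.
have := fw _ _ zy; rewrite ler_norml => /andP[_ fzy].
have : lam * h ^+ 2 * enorm (zvec R r) ^+ 2 <= lam * enorm (y - x) ^+ 2.
  rewrite -mulrA -enormZ_sqr; apply: (ler_wpM2l lam_ge0).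
  by rewrite ler_sqr ?nnegrE ?enorm_ge0.
lra.
Qed.

End GridMoreau.

Theorem theorem4p2 (R : realType) (n : nat) (h lam a b : R)
  (f : 'rV[R]_n -> R) :
  (0 < n)%N -> 0 < h -> 0 < lam -> 0 < a -> 0 <= b ->
  (forall t : R, 0 <= t -> (modcont f t <= (a * t + b)%:E)%E) ->
  forall k : 'rV[int]_n,
    let xk := h *: zvec R k in
    `|dmoreau h lam f xk - moreau lam f xk|
      <= fine (modcont f (h * Num.sqrt n%:R))
         + 2 * lam * h ^+ 2 * n%:R
         + 2 * h * Num.sqrt lam
             * Num.sqrt (fine (modcont f (a / lam + Num.sqrt (b / lam)))).
Proof.
move=> _ h_gt0 lam_gt0 _ _ mcf k /=; set xk := h *: zvec R k.
set w := fine (modcont f (h * Num.sqrt n%:R)).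
have t_ge0 : 0 <= h * Num.sqrt n%:R by rewrite mulr_ge0 ?sqrtr_ge0 ?ltW.
have fw u v : enorm (u - v) <= h * Num.sqrt n%:R -> `|f u - f v| <= w.
  exact/le_fine_modcont/mcf.
have w_ge0 : 0 <= w by have := fw xk xk; rewrite subrr enorm0 subrr normr0; apply.
have growth y : f xk - a * enorm (y - xk) - b <= f y.
  have := le_trans (le_modcont f (lexx (enorm (y - xk)))) (mcf _ (enorm_ge0 (y - xk))).
  by rewrite lee_fin ler_norml => /andP[+ _]; lra.
have lbS := moreau_set_has_lbound lam_gt0 growth.
have lower := moreau_le_dmoreau h lbS.
have upper := dmoreau_le_moreau h_gt0 (ltW lam_gt0) lbS fw.
have : 0 <= 2 * lam * h ^+ 2 * n%:R by rewrite !mulr_ge0 ?sqr_ge0 ?ler0n ?ltW.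
have : 0 <= 2 * h * Num.sqrt lam * Num.sqrt (fine (modcont f (a / lam + Num.sqrt (b / lam)))).
  by rewrite !mulr_ge0 ?sqrtr_ge0 ?ler0n ?ltW.
by rewrite ger0_norm ?subr_ge0 //; lra.
Qed.
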